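(* Suppose $\rho_1,\rho_2\in\mathcal{SC}$ with $\rho_1\sim\rho_2$. Then for every $\sigma\in\mathcal{SC}$ and every relation $B\subseteq\mathcal{SC}\times\mathcal{SC}$, $\rho_2\dashv_B\sigma$ implies $\rho_1\dashv_B\sigma$.
   Context: Fix base types $BT$ with preorder $\leq_{\mathsf b}$ and labels $\mathcal L$. Contract terms: $\sigma::=\mathbf 1\mid ?\mathtt t.\sigma\mid !\mathtt t.\sigma\mid !(\sigma).\sigma\mid ?(\sigma).\sigma\mid \sum_{i\in I}?l_i.\sigma_i\mid \bigoplus_{i\in I}!l_i.\sigma_i\mid \mu x.\sigma\mid x$ ($I$ finite nonempty, labels distinct). $\mathcal{SC}$ = closed guarded terms. Actions $\mathsf{Act}=\{?l,!l\}\cup\{?\mathtt t,!\mathtt t\}\cup\{?(\sigma),!(\sigma):\sigma\in\mathcal{SC}\}$. LTS: $\mathbf 1\xrightarrow\checkmark$; $\lambda.\sigma\xrightarrow\lambda\sigma$ for prefixes (including $!l.\sigma$); $\bigoplus_{i\in I}!l_i.\sigma_i\xrightarrow\tau!l_i.\sigma_i$ for $|I|>1$; $\sum ?l_i.\sigma_i\xrightarrow{?l_i}\sigma_i$; $\mu x.\sigma\xrightarrow\tau\sigma[\mu x.\sigma/x]$. Strong bisimilarity $\sim$: largest $R$ such that $\sigma_1R\sigma_2$ implies $\sigma_1\xrightarrow\checkmark$ iff $\sigma_2\xrightarrow\checkmark$, and for each $\mu\in\mathsf{Act}\cup\{\tau\}$ every $\sigma_1\xrightarrow\mu\sigma_1'$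 is matched by some $\sigma_2\xrightarrow\mu\sigma_2'$ with $\sigma_1'R\sigma_2'$ and vice versa. For $B$: $\lambda_1\bowtie_B\lambda_2$ iff the pair is $(!l,?l)$, $(?l,!l)$, $(!\mathtt t_1,?\mathtt t_2)$ with $\mathtt t_1\leq_{\mathsf b}\mathtt t_2$, $(?\mathtt t_1,!\mathtt t_2)$ with $\mathtt t_2\leq_{\mathsf b}\mathtt t_1$, $(!(\sigma_1),?(\sigma_2))$ with $\sigma_1B\sigma_2$, $(?(\sigma_1),!(\sigma_2))$ with $\sigma_2B\sigma_1$. $\rho\|\sigma\xrightarrow\tau_B$ by a $\tau$ of either side or by synchronisation $\rho\xrightarrow{\lambda_1}\rho'$, $\sigma\xrightarrow{\lambda_2}\sigma'$, $\lambda_1\bowtie_B\lambda_2$ giving $\rho'\|\sigma'$. $\dashv_B$: greatest $R$ with $\rho R\sigma$ implying (i) if $\rho\|\sigma$ has no $\xrightarrow\tau_B$ move then $\rho\xrightarrow\checkmark$ and $\sigma\xrightarrow\checkmark$; (ii) every $\rho\|\sigma\xrightarrow\tau_B\rho'\|\sigma'$ has $\rho'R\sigma'$. *)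

From Stdlib Require Import List Arith.
Import ListNotations.

Set Implicit Arguments.

Section Contracts.
Context {BT L : Type}.

(* Contract terms.  Recursion variables are natural numbers.
   TSum  [(l_i,s_i)]  = sum_{i in I} ?l_i.s_i
   TOplus [(l_i,s_i)] = oplus_{i in I} !l_i.s_i  (a singleton is the prefix !l.s) *)
Inductive term : Type :=
| TEnd : term
| TInT : BT -> term -> term
| TOutT : BT -> term -> term
| TOutS : term -> term -> term
| TInS : term -> term -> term
| TSum : list (L * term) -> term
| TOplus : list (L * term) -> term
| TRec : nat -> term -> term
| TVar : nat -> term.

(* capture-avoidance is not needed: we only substitute closed terms *)
Fixpoint subst (x : nat) (r : term) (t : term) : term :=
  match t with
  | TEnd => TEnd
  | TInT b s => TInT b (subst x r s)
  | TOutT b s => TOutT b (subst x r s)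
  | TOutS p s => TOutS (subst x r p) (subst x r s)
  | TInS p s => TInS (subst x r p) (subst x r s)
  | TSum br => TSum (map (fun ls => (fst ls, subst x r (snd ls))) br)
  | TOplus br => TOplus (map (fun ls => (fst ls, subst x r (snd ls))) br)
  | TRec y s => if Nat.eqb x y then TRec y s else TRec y (subst x r s)
  | TVar y => if Nat.eqb x y then r else TVar y
  end.

Fixpoint free_in (x : nat) (t : term) : Prop :=
  match t with
  | TEnd => False
  | TInT _ s | TOutT _ s => free_in x s
  | TOutS p s | TInS p s => free_in x p \/ free_in x s
  | TSum br | TOplus br => fold_right (fun ls P => free_in x (snd ls) \/ P) False br
  | TRec y s => x <> y /\ free_in x s
  | TVar y => x = y
  end.

Fixpoint unguarded_in (x : nat) (t : term) : Prop :=
  match t with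
  | TRec y s => x <> y /\ unguarded_in x s
  | TVar y => x = y
  | _ => False
  end.

Fixpoint guarded_wf (t : term) : Prop :=
  match t with
  | TEnd => True
  | TInT _ s | TOutT _ s => guarded_wf s
  | TOutS p s | TInS p s => guarded_wf p /\ guarded_wf s
  | TSum br | TOplus br =>
      br <> [] /\ NoDup (map fst br) /\
      fold_right (fun ls P => guarded_wf (snd ls) /\ P) True br
  | TRec x s => ~ unguarded_in x s /\ guarded_wf s
  | TVar _ => True
  end.

Definition closed (t : term) : Prop := forall x, ~ free_in x t.

Definition SC (t : term) : Prop := closed t /\ guarded_wf t.

Inductive act : Type :=
| AInL : L -> act | AOutL : L -> act
| AInT : BT -> act | AOutT : BT -> act
| AInS : term -> act | AOutS : term -> act.

(* transition labels: Some a = visible action a, None = tau *)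
Inductive step : term -> option act -> term -> Prop :=
| st_inT : forall b s, step (TInT b s) (Some (AInT b)) s
| st_outT : forall b s, step (TOutT b s) (Some (AOutT b)) s
| st_outS : forall p s, step (TOutS p s) (Some (AOutS p)) s
| st_inS : forall p s, step (TInS p s) (Some (AInS p)) s
| st_outL : forall l s, step (TOplus [(l, s)]) (Some (AOutL l)) s
| st_oplus : forall br l s, 1 < length br -> In (l, s) br ->
    step (TOplus br) None (TOplus [(l, s)])
| st_sum : forall br l s, In (l, s) br -> step (TSum br) (Some (AInL l)) s
| st_rec : forall x s, step (TRec x s) None (subst x (TRec x s) s).

(* the tick transition: 1 --check--> *)
Definition tick (t : term) : Prop := t = TEnd.

Definition bisimulation (R : term -> term -> Prop) : Prop :=
  forall s1 s2, R s1 s2 ->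
    (tick s1 <-> tick s2) /\
    (forall m s1', step s1 m s1' -> exists s2', step s2 m s2' /\ R s1' s2') /\
    (forall m s2', step s2 m s2' -> exists s1', step s1 m s1' /\ R s1' s2').

Definition bisim (s1 s2 : term) : Prop :=
  exists R, bisimulation R /\ R s1 s2.

Context (leb : BT -> BT -> Prop).

Definition sync (B : term -> term -> Prop) (a1 a2 : act) : Prop :=
  match a1, a2 with
  | AOutL l1, AInL l2 => l1 = l2
  | AInL l1, AOutL l2 => l1 = l2
  | AOutT t1, AInT t2 => leb t1 t2
  | AInT t1, AOutT t2 => leb t2 t1
  | AOutS s1, AInS s2 => B s1 s2
  | AInS s1, AOutS s2 => B s2 s1
  | _, _ => False
  end.

Inductive par_step (B : term -> term -> Prop) :
    term -> term -> term -> term -> Prop :=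
| ps_left : forall r s r', step r None r' -> par_step B r s r' s
| ps_right : forall r s s', step s None s' -> par_step B r s r s'
| ps_sync : forall r s r' s' a1 a2,
    step r (Some a1) r' -> step s (Some a2) s' -> sync B a1 a2 ->
    par_step B r s r' s'.

Definition compliance_rel (B : term -> term -> Prop) (R : term -> term -> Prop) : Prop :=
  forall r s, R r s ->
    ((forall r' s', ~ par_step B r s r' s') -> tick r /\ tick s) /\
    (forall r' s', par_step B r s r' s' -> R r' s').

(* rho ⊣_B sigma : the greatest such relation *)
Definition compliant (B : term -> term -> Prop) (r s : term) : Prop :=
  exists R, compliance_rel B R /\ R r s.

End Contracts.

(* A bisimulation relates states that can take the same moves, so a move of
   rho1 || sigma is matched by a move of rho2 || sigma to a related pair, and
   conversely.  Hence composing the bisimulation with a B-compliance relation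
   yields again a B-compliance relation: stuck pairs of the composite are stuck
   pairs of the original, and successors stay in the composite. *)
From Stdlib Require Import RelationClasses.

Section BisimCompliance.
Context {BT L : Type} (leb : BT -> BT -> Prop).

Lemma bisimulation_flip {R : @term BT L -> @term BT L -> Prop} :
  bisimulation R -> bisimulation (fun s2 s1 => R s1 s2).
Proof.
  intros HR s2 s1 H. destruct (HR _ _ H) as [Htick [Hfwd Hbwd]].
  split; [| split]; [now symmetry | exact Hbwd | exact Hfwd].
Qed.

Lemma par_step_bisimulation {R : @term BT L -> @term BT L -> Prop} B {r1 r2 s r1' s'} :
  bisimulation R -> R r1 r2 -> par_step leb B r1 s r1' s' ->
  exists r2', par_step leb B r2 s r2' s' /\ R r1' r2'.
Proof.
  intros HR H12 Hp. destruct (HR _ _ H12) as [_ [Hfwd _]].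
  inversion Hp; subst.
  - destruct (Hfwd _ _ H) as [r2' [Hs HR']]. eauto using ps_left.
  - eauto using ps_right.
  - destruct (Hfwd _ _ H) as [r2' [Hs HR']]. eauto using ps_sync.
Qed.

Lemma compliance_rel_bisimulation_comp (R Rc : @term BT L -> @term BT L -> Prop) B :
  bisimulation R -> compliance_rel leb B Rc ->
  compliance_rel leb B (fun r s => exists r2, R r r2 /\ Rc r2 s).
Proof.
  intros HR HRc r s [r2 [Hb Hc]].
  destruct (HRc _ _ Hc) as [Hstuck Hsucc].
  split.
  - intros Hno.
    assert (Hno2 : forall r2' s', ~ par_step leb B r2 s r2' s').
    { intros r2' s' Hp.
      destruct (par_step_bisimulation B (bisimulation_flip HR) Hb Hp) as [r1' [Hp1 _]].
      exact (Hno _ _ Hp1). }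
    destruct (Hstuck Hno2) as [Htick2 Htick_s].
    destruct (HR _ _ Hb) as [Htick _].
    split; [apply Htick |]; assumption.
  - intros r' s' Hp.
    destruct (par_step_bisimulation B HR Hb Hp) as [r2' [Hp2 HR']].
    eauto.
Qed.

Lemma compliant_bisim_l B {r1 r2 s : @term BT L} :
  bisim r1 r2 -> compliant leb B r2 s -> compliant leb B r1 s.
Proof.
  intros [R [HR H12]] [Rc [HRc Hc]].
  exists (fun r s => exists r2, R r r2 /\ Rc r2 s).
  split; [apply compliance_rel_bisimulation_comp |]; eauto.
Qed.

End BisimCompliance.

Theorem mainTheorem9 (BT L : Type) (leb : BT -> BT -> Prop) (Hleb : PreOrder leb)
  (rho1 rho2 : @term BT L) :
  SC rho1 -> SC rho2 -> bisim rho1 rho2 ->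
  forall (sigma : @term BT L) (B : @term BT L -> @term BT L -> Prop),
    SC sigma ->
    (forall x y, B x y -> SC x /\ SC y) ->
    compliant leb B rho2 sigma -> compliant leb B rho1 sigma.
Proof.
  intros _ _ Hbisim sigma B _ _.
  exact (compliant_bisim_l leb B Hbisim).
Qed.
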